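(* Let $(\varphi_n)_{n\ge0}$ be vectors in $\mathbb{R}^d$, $r_0=1$, $r_n=1+\sum_{i=1}^n\|\varphi_i\|^2$, and assume $r_n\to\infty$ and $r_n=O(r_{n-1})$. Then there exist a constant $l\ge 1$ and a strictly increasing sequence of nonnegative integers $(t_k)_{k\ge0}$ such that for all $k\ge1$ $$\frac{k}{l}<\frac{r_{t_k}}{r_{t_{k-1}}}<lk,$$ i.e. $r_{t_k}=\Theta(k\,r_{t_{k-1}})$.
   Context: $r_n=O(r_{n-1})$ means there is a constant $C$ with $r_n\le C r_{n-1}$ for all $n\ge1$. *)

From HB Require Import structures.
From mathcomp Require Import all_boot all_order all_algebra.
From mathcomp Require Import reals.
Set Implicit Arguments. Unset Strict Implicit. Unset Printing Implicit Defensive.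
Import Order.TTheory GRing.Theory Num.Theory.
Local Open Scope ring_scope.

Definition sqnorm (R : realType) (d : nat) (v : 'rV[R]_d) : R :=
  \sum_(j < d) (v 0 j) ^+ 2.

Definition rseq (R : realType) (d : nat) (phi : nat -> 'rV[R]_d) (n : nat) : R :=
  1 + \sum_(1 <= i < n.+1) sqnorm (phi i).

(* Choose t_k greedily: t_k is the first index after t_(k-1) at which r has
   grown by the factor k.  Then r_(t_k) >= k r_(t_(k-1)) by construction,
   and by minimality r_(t_k - 1) < k r_(t_(k-1)) (or t_k - 1 = t_(k-1)), so
   the bounded one-step growth r_n <= C r_(n-1) gives r_(t_k) <= C k r_(t_(k-1)). *)

From HB Require Import structures.
From mathcomp Require Import all_boot all_order all_algebra.
From mathcomp Require Import reals.
From mathcomp Require Import lra.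

Set Implicit Arguments.
Unset Strict Implicit.
Unset Printing Implicit Defensive.
Import Order.TTheory GRing.Theory Num.Theory.
Local Open Scope ring_scope.

Section GreedySubsequence.

Variables (R : realFieldType) (u : nat -> R) (C : R).

Hypothesis u_gt0 : forall n, 0 < u n.
Hypothesis u_unbounded : forall M, exists N, forall n, (N <= n)%N -> M <= u n.
Hypothesis u_growth : forall n, (1 <= n)%N -> u n <= C * u n.-1.

Lemma growth_const_gt0 : 0 < C.
Proof.
have := lt_le_trans (u_gt0 1) (@u_growth 1 isT).
by rewrite pmulr_lgt0.
Qed.

Lemma exists_jump (k t : nat) : exists n, (t < n)%N && (k%:R * u t <= u n).
Proof.
have [N uN] := u_unbounded (k%:R * u t).
by exists (maxn N t.+1); rewrite leq_max ltnSn orbT uN // leq_maxl.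
Qed.

Definition jump (k t : nat) : nat := ex_minn (exists_jump k t).

Lemma jump_gt (k t : nat) : (t < jump k t)%N.
Proof. by rewrite /jump; case: ex_minnP => n /andP[]. Qed.

Lemma jump_lower (k t : nat) : k%:R * u t <= u (jump k t).
Proof. by rewrite /jump; case: ex_minnP => n /andP[]. Qed.

Lemma jump_upper (k t : nat) : (1 <= k)%N -> u (jump k t) <= C * (k%:R * u t).
Proof.
move=> k_gt0; have C_gt0 := growth_const_gt0.
rewrite /jump; case: ex_minnP => n /andP[t_lt_n _] n_min.
have n_gt0 : (1 <= n)%N by apply: leq_ltn_trans t_lt_n.
apply: le_trans (u_growth n_gt0) _; rewrite ler_pM2l //.
have [t_eq | t_lt] := eqVneq t n.-1.
  by rewrite -t_eq ler_pMl // (ler_nat R 1).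
have t_lt_pred : (t < n.-1)%N by rewrite ltn_neqAle t_lt -ltnS prednK.
have : ~~ ((t < n.-1)%N && (k%:R * u t <= u n.-1)).
  by apply/negP => /n_min; rewrite leqNgt ltn_predL n_gt0.
by rewrite t_lt_pred /= -ltNge => /ltW.
Qed.

Fixpoint greedy_seq (k : nat) : nat :=
  if k is k'.+1 then jump k (greedy_seq k') else 0.

Lemma greedy_seq_increasing (k : nat) : (greedy_seq k < greedy_seq k.+1)%N.
Proof. exact: jump_gt. Qed.

Lemma greedy_seq_ratio (k : nat) : (1 <= k)%N ->
  k%:R / (C + 1) < u (greedy_seq k) / u (greedy_seq k.-1) /\
  u (greedy_seq k) / u (greedy_seq k.-1) < (C + 1) * k%:R.
Proof.
case: k => // k _ /=; set t := greedy_seq k.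
have C_gt0 := growth_const_gt0; have ut_gt0 := u_gt0 t.
have k_gt0 : 0 < k.+1%:R :> R by rewrite ltr0n.
have q_lower : k.+1%:R <= u (jump k.+1 t) / u t by rewrite ler_pdivlMr // jump_lower.
have q_upper : u (jump k.+1 t) / u t <= C * k.+1%:R.
  by rewrite ler_pdivrMr // -mulrA jump_upper.
set q := u (jump k.+1 t) / u t in q_lower q_upper *.
by rewrite ltr_pdivrMr ?addr_gt0 // mulrDl mulrDr mul1r mulr1; split; nra.
Qed.

End GreedySubsequence.

Lemma rseq_gt0 (R : realType) (d : nat) (phi : nat -> 'rV[R]_d) (n : nat) :
  0 < rseq phi n.
Proof.
rewrite ltr_wpDr // sumr_ge0 // => i _.
by rewrite sumr_ge0 // => j _; rewrite sqr_ge0.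
Qed.

Theorem mainTheorem4 (R : realType) (d : nat) (phi : nat -> 'rV[R]_d) :
  (forall M : R, exists N : nat, forall n : nat, (N <= n)%N -> M <= rseq phi n) ->
  (exists C : R, forall n : nat, (1 <= n)%N -> rseq phi n <= C * rseq phi n.-1) ->
  exists (l : R) (t : nat -> nat),
    1 <= l /\ (forall k : nat, (t k < t k.+1)%N) /\
    (forall k : nat, (1 <= k)%N ->
       k%:R / l < rseq phi (t k) / rseq phi (t k.-1) /\
       rseq phi (t k) / rseq phi (t k.-1) < l * k%:R).
Proof.
move=> r_unbounded [C r_growth].
have r_gt0 := rseq_gt0 phi.
have C_gt0 := growth_const_gt0 r_gt0 r_growth.
exists (C + 1), (greedy_seq r_unbounded); split; first by rewrite lerDr ltW.
split; first exact: greedy_seq_increasing.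
exact: greedy_seq_ratio.
Qed.
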